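(* With $\alpha=(1+\sqrt5)/2$, $$\sum_{k=1}^\infty\frac{1}{5^k(2k-1)(2k)(2k+1)}=\frac12\ln\frac45+\frac{3}{\sqrt5}\ln\alpha-\frac12,$$ $$\sum_{k=1}^\infty\frac{4^k}{5^k(2k-1)(2k)(2k+1)}=-\frac12\ln 5+\frac{27}{4\sqrt5}\ln\alpha-\frac12,$$ $$\sum_{k=1}^\infty\frac{5^k}{9^k(2k-1)(2k)(2k+1)}=\ln\frac23+\frac{14}{3\sqrt5}\ln\alpha-\frac12.$$ *)

From Stdlib Require Import Reals.
From Coquelicot Require Import Coquelicot.
Open Scope R_scope.

Definition alpha : R := (1 + sqrt 5) / 2.

Definition term (x : R) (k : nat) : R :=
  x ^ k / ((2 * INR k - 1) * (2 * INR k) * (2 * INR k + 1)).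

Definition shifted (x : R) : nat -> R := fun n => term x (S n).

From Stdlib Require Import Reals Lra Lia.
From Coquelicot Require Import Coquelicot.
Open Scope R_scope.

(* Integrating the geometric series termwise gives -ln(1 - t) = sum_{m>=1} t^m/m,
   whose odd and even parts are the series of ln((1+t)/(1-t))/2 and of
   -ln(1 - t^2)/2.  The partial fractions
   1/((2k-1)2k(2k+1)) = 1/(2(2k-1)) - 1/(2k) + 1/(2(2k+1))
   then give, for 0 < t < 1,
   sum_{k>=1} t^(2k)/((2k-1)2k(2k+1)) = (t + 1/t)/4 ln((1+t)/(1-t)) + ln(1 - t^2)/2 - 1/2.
   For t = 1/sqrt 5, 2/sqrt 5, sqrt 5/3 the ratio (1+t)/(1-t) is alpha^2, alpha^6, alpha^4. *)

(* [is_series_ext] states its hypothesis in the normed-module carrier, where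
   [ring] and [field] do not apply. *)
Lemma is_series_ext_R (a b : nat -> R) (l : R) :
  (forall n, a n = b n) -> is_series a l -> is_series b l.
Proof. apply is_series_ext. Qed.

Lemma CV_radius_const_1 : CV_radius (fun _ => 1) = 1.
Proof.
  rewrite (CV_radius_finite_DAlembert _ 1).
  - now rewrite Rinv_1.
  - intros _; lra.
  - lra.
  - apply is_lim_seq_ext with (fun _ => 1); [| apply is_lim_seq_const].
    intros n; now rewrite Rdiv_1_r, Rabs_R1.
Qed.

Lemma PSeries_const_1 t : Rabs t < 1 -> PSeries (fun _ => 1) t = / (1 - t).
Proof.
  intros Ht; apply is_pseries_unique, is_pseries_R.
  apply is_series_ext_R with (2 := is_series_geom t Ht); intros n; ring.
Qed.

Lemma RInt_inv_1m t : t < 1 -> RInt (fun y => / (1 - y)) 0 t = - ln (1 - t).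
Proof.
  intros Ht; apply is_RInt_unique.
  replace (- ln (1 - t)) with (- ln (1 - t) - - ln (1 - 0))
    by (rewrite Rminus_0_r, ln_1; ring).
  apply (is_RInt_derive (fun y => - ln (1 - y))); intros y Hy;
    assert (Hy1 : y < 1) by (revert Hy; unfold Rmin, Rmax; destruct Rle_dec; lra).
  - auto_derive; [lra | field; lra].
  - apply (ex_derive_continuous (V := R_NormedModule)); auto_derive; lra.
Qed.

Lemma is_series_ln_1m t : Rabs t < 1 ->
  is_series (fun n => t ^ S n / INR (S n)) (- ln (1 - t)).
Proof.
  intros Ht.
  assert (Hr : Rbar_lt (Rabs t) (CV_radius (fun _ => 1)))
    by now rewrite CV_radius_const_1.
  assert (Hint := proj1 (is_pseries_R _ _ _) (is_pseries_RInt _ _ Hr)).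
  replace (- ln (1 - t)) with (RInt (PSeries (fun _ => 1)) 0 t).
  - apply is_series_ext_R with (fun n => PS_Int (fun _ => 1) (S n) * t ^ S n).
    + intros n; unfold PS_Int; field; apply not_0_INR; lia.
    + apply (is_series_incr_1 (fun n => PS_Int (fun _ => 1) n * t ^ n)).
      unfold plus; simpl; now rewrite Rmult_0_l, Rplus_0_r.
  - apply Rabs_def2 in Ht.
    rewrite <- RInt_inv_1m by lra.
    apply RInt_ext; intros y Hy; apply PSeries_const_1, Rabs_def1;
      revert Hy; unfold Rmin, Rmax; destruct Rle_dec; lra.
Qed.

Lemma is_series_pairs (u : nat -> R) l :
  is_series u l -> is_series (fun n => u (2 * n)%nat + u (S (2 * n))) l.
Proof.
  intros H; unfold is_series in *.
  apply filterlim_ext with (fun n => sum_n u (S (2 * n))).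
  - induction x as [|n IH].
    + now rewrite sum_Sn, !sum_O.
    + rewrite (sum_Sn _ n), <- IH.
      replace (2 * S n)%nat with (S (S (2 * n))) by lia.
      rewrite 2!sum_Sn; apply Rplus_assoc.
  - apply filterlim_comp with eventually; [| exact H].
    apply eventually_subseq; intros n; lia.
Qed.

Lemma pow_S_double x n : x ^ S (2 * n) = x * (x ^ 2) ^ n.
Proof. now rewrite <- pow_mult. Qed.

Lemma pow_SS_double x n : x ^ S (S (2 * n)) = x ^ 2 * (x ^ 2) ^ n.
Proof. rewrite <- pow_mult; simpl; ring. Qed.

Lemma INR_S_double n : INR (S (2 * n)) = 2 * INR n + 1.
Proof. rewrite S_INR, mult_INR; reflexivity. Qed.

Lemma INR_SS_double n : INR (S (S (2 * n))) = 2 * INR n + 2.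
Proof. rewrite S_INR, INR_S_double; ring. Qed.

Lemma is_series_ln_1p t : Rabs t < 1 ->
  is_series (fun n => (- t) ^ S n / INR (S n)) (- ln (1 + t)).
Proof.
  intros Ht; replace (1 + t) with (1 - - t) by ring.
  apply is_series_ln_1m; now rewrite Rabs_Ropp.
Qed.

Lemma is_series_atanh t : Rabs t < 1 ->
  is_series (fun n => t * (t ^ 2) ^ n / (2 * INR n + 1)) ((ln (1 + t) - ln (1 - t)) / 2).
Proof.
  intros Ht.
  assert (H := is_series_pairs _ _ (is_series_scal_l (/ 2) _ _
    (is_series_minus _ _ _ _ (is_series_ln_1m t Ht) (is_series_ln_1p t Ht)))).
  replace ((ln (1 + t) - ln (1 - t)) / 2) with (/ 2 * (- ln (1 - t) - - ln (1 + t)))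
    by field.
  apply is_series_ext_R with (2 := H); intros n.
  cbv beta; rewrite INR_S_double, INR_SS_double, !pow_S_double, !pow_SS_double.
  replace ((- t) ^ 2) with (t ^ 2) by ring.
  unfold scal, minus, plus, opp; simpl; unfold mult; simpl.
  assert (0 <= INR n) by apply pos_INR.
  field; lra.
Qed.

Lemma is_series_ln_1m_sqr t : Rabs t < 1 ->
  is_series (fun n => t ^ 2 * (t ^ 2) ^ n / (2 * INR n + 2)) (- (ln (1 - t) + ln (1 + t)) / 2).
Proof.
  intros Ht.
  assert (H := is_series_pairs _ _ (is_series_scal_l (/ 2) _ _
    (is_series_plus _ _ _ _ (is_series_ln_1m t Ht) (is_series_ln_1p t Ht)))).
  replace (- (ln (1 - t) + ln (1 + t)) / 2) with (/ 2 * (- ln (1 - t) + - ln (1 + t)))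
    by field.
  apply is_series_ext_R with (2 := H); intros n.
  cbv beta; rewrite INR_S_double, INR_SS_double, !pow_S_double, !pow_SS_double.
  replace ((- t) ^ 2) with (t ^ 2) by ring.
  unfold scal, plus; simpl; unfold mult; simpl.
  assert (0 <= INR n) by apply pos_INR.
  field; lra.
Qed.

Lemma is_series_shifted_sqr t : t <> 0 -> Rabs t < 1 ->
  is_series (shifted (t ^ 2))
    ((t + / t) / 4 * (ln (1 + t) - ln (1 - t)) + (ln (1 - t) + ln (1 + t)) / 2 - 1 / 2).
Proof.
  intros Ht0 Ht.
  set (odd_term := fun n => t * (t ^ 2) ^ n / (2 * INR n + 1)).
  set (LA := (ln (1 + t) - ln (1 - t)) / 2).
  set (LB := - (ln (1 - t) + ln (1 + t)) / 2).
  assert (HA : is_series odd_term LA) by now apply is_series_atanh.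
  assert (HB := is_series_ln_1m_sqr t Ht).
  assert (HA1 : is_series (fun n => odd_term (S n)) (LA - t)).
  { apply is_series_incr_1.
    unfold odd_term, plus; simpl; replace (LA - t + t * 1 / (2 * 0 + 1)) with LA by field.
    exact HA. }
  assert (H := is_series_plus _ _ _ _
    (is_series_minus _ _ _ _ (is_series_scal_l (t / 2) _ _ HA) HB)
    (is_series_scal_l (/ (2 * t)) _ _ HA1)).
  replace (_ + _ - 1 / 2) with (t / 2 * LA - LB + / (2 * t) * (LA - t))
    by (unfold LA, LB; field; exact Ht0).
  apply is_series_ext_R with (2 := H); intros n.
  unfold shifted, term, odd_term; rewrite S_INR.
  unfold scal, minus, plus, opp; simpl; unfold mult; simpl.
  assert (0 <= INR n) by apply pos_INR.
  field; lra.
Qed.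

Lemma is_series_shifted_golden (t : R) (k : nat) (x c l : R) : 0 < t -> x < 1 ->
  t ^ 2 = x -> 1 + t = (1 - t) * alpha ^ k -> (t + / t) * INR k / 4 = c ->
  l = c * ln alpha + ln (1 - x) / 2 - 1 / 2 ->
  is_series (shifted x) l.
Proof.
  intros Ht0 Hx1 <- Hratio <- ->.
  assert (Ht : t < 1) by nra.
  assert (Halpha : 0 < alpha) by (unfold alpha; pose proof (sqrt_pos 5); lra).
  assert (Hk : ln (1 + t) - ln (1 - t) = INR k * ln alpha).
  { rewrite Hratio, ln_mult, ln_pow by (try apply pow_lt; lra); ring. }
  assert (Hx : ln (1 - t ^ 2) = ln (1 - t) + ln (1 + t)).
  { rewrite <- ln_mult by lra; f_equal; ring. }
  replace ((t + / t) * INR k / 4 * ln alpha) with ((t + / t) / 4 * (ln (1 + t) - ln (1 - t)))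
    by (rewrite Hk; field; lra).
  rewrite Hx.
  apply is_series_shifted_sqr; [lra | rewrite Rabs_pos_eq; lra].
Qed.

Lemma sqrt5_sqr : sqrt 5 * sqrt 5 = 5.
Proof. apply sqrt_sqrt; lra. Qed.

Lemma sqrt5_bounds : 2 < sqrt 5 < 3.
Proof. pose proof sqrt5_sqr; pose proof (sqrt_pos 5); nra. Qed.

Lemma alpha_pow_SS n : alpha ^ S (S n) = alpha ^ S n + alpha ^ n.
Proof.
  assert (Hsqr : alpha * alpha = alpha + 1).
  { unfold alpha; pose proof sqrt5_sqr; nra. }
  simpl; rewrite <- Rmult_assoc, Hsqr; ring.
Qed.

Lemma is_series_shifted_1_5 :
  is_series (shifted (1 / 5)) (1 / 2 * ln (4 / 5) + 3 / sqrt 5 * ln alpha - 1 / 2).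
Proof.
  pose proof sqrt5_sqr; pose proof sqrt5_bounds.
  apply (is_series_shifted_golden (/ sqrt 5) 2 _ (3 / sqrt 5)).
  - apply Rinv_0_lt_compat; lra.
  - lra.
  - field_simplify_eq; lra.
  - rewrite !alpha_pow_SS; unfold alpha; simpl; field_simplify_eq; nra.
  - simpl; field_simplify_eq; nra.
  - replace (1 - 1 / 5) with (4 / 5) by field; field; lra.
Qed.

Lemma is_series_shifted_4_5 :
  is_series (shifted (4 / 5)) (- (1 / 2) * ln 5 + 27 / (4 * sqrt 5) * ln alpha - 1 / 2).
Proof.
  pose proof sqrt5_sqr; pose proof sqrt5_bounds.
  apply (is_series_shifted_golden (2 / sqrt 5) 6 _ (27 / (4 * sqrt 5))).
  - apply Rdiv_lt_0_compat; lra.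
  - lra.
  - field_simplify_eq; lra.
  - rewrite !alpha_pow_SS; unfold alpha; simpl; field_simplify_eq; nra.
  - simpl; field_simplify_eq; nra.
  - replace (1 - 4 / 5) with (/ 5) by field.
    rewrite ln_Rinv by lra; field; lra.
Qed.

Lemma is_series_shifted_5_9 :
  is_series (shifted (5 / 9)) (ln (2 / 3) + 14 / (3 * sqrt 5) * ln alpha - 1 / 2).
Proof.
  pose proof sqrt5_sqr; pose proof sqrt5_bounds.
  apply (is_series_shifted_golden (sqrt 5 / 3) 4 _ (14 / (3 * sqrt 5))).
  - lra.
  - lra.
  - field_simplify_eq; lra.
  - rewrite !alpha_pow_SS; unfold alpha; simpl; field_simplify_eq; nra.
  - simpl; field_simplify_eq; nra.
  - replace (1 - 5 / 9) with ((2 / 3) ^ 2) by field.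
    rewrite ln_pow by lra; simpl; field; lra.
Qed.

Theorem corollary5 :
  is_series (shifted (1 / 5))
    (1 / 2 * ln (4 / 5) + 3 / sqrt 5 * ln alpha - 1 / 2) /\
  is_series (shifted (4 / 5))
    (- (1 / 2) * ln 5 + 27 / (4 * sqrt 5) * ln alpha - 1 / 2) /\
  is_series (shifted (5 / 9))
    (ln (2 / 3) + 14 / (3 * sqrt 5) * ln alpha - 1 / 2).
Proof.
  split; [| split].
  - exact is_series_shifted_1_5.
  - exact is_series_shifted_4_5.
  - exact is_series_shifted_5_9.
Qed.
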